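(* Consider the following Markov decision problem with a finite horizon of $N\ge 1$ decision epochs. The state space is $[0,\infty)\times[0,\infty)$ and at every state the action set is $\{0,1\}$. In state $\xi=(\xi_1,\xi_2)$, taking action $a\in\{0,1\}$ yields the (time-homogeneous) reward $r(\xi,a)=\xi_{1+a}$. The next state $\xi'$ is obtained as follows: if $a=1$ then $\xi'=(\xi_1+\zeta,\xi_2)$ with $\zeta$ having density $p_1$; if $a=0$ then $\xi'=(\xi_1,\xi_2+\zeta)$ with $\zeta$ having density $p_2$. Here $p_1,p_2$ are probability densities on $[0,\infty)$ with respect to a $\sigma$-finite measure $\lambda$, having a common finite mean $\theta$. Then the greedy policy, which takes action $1$ when $\xi_1<\xi_2$ and action $0$ when $\xi_1>\xi_2$ (with either action allowed when $\xi_1=\xi_2$), is optimal under the total expected reward criterion: for every $N\ge1$ and every initial state, it attains the maximum expected total reward over $N$ epochs among all policies.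
   Context: In the application of the paper, $\xi=(\Gamma_{\mathbf R}[R(n)],\Gamma_{\mathbf S}[S(n)])$, action $1$ means reading the next record from source $\mathbf R$, and the reward is the expected number of new matches; but the claim is the abstract statement above. ''Policies'' means general (history-dependent, possibly randomized) Markov decision policies. *)

From HB Require Import structures.
From mathcomp Require Import all_boot all_order all_algebra.
From mathcomp Require Import all_classical all_reals all_analysis.
Set Implicit Arguments. Unset Strict Implicit. Unset Printing Implicit Defensive.
Import Order.TTheory GRing.Theory Num.Theory.
Local Open Scope classical_set_scope.
Local Open Scope ring_scope.

Section MDP.
Variable R : realType.

(* State histories of k past epochs: iterated products of the state space
   R * R (with its product Borel sigma-algebra); the last (outermost right)
   component is the current state.  histT 0 = R * R (only the current state). *)
Fixpoint histT (k : nat) : {d : measure_display & measurableType d} :=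
  match k with
  | 0 => existT (fun d => measurableType d) _ ((R * R)%type : measurableType _)
  | k.+1 => existT (fun d => measurableType d) _
             ((projT2 (histT k) * (R * R))%type : measurableType _)
  end.

Definition hist (k : nat) : Type := projT2 (histT k).

Definition cur (k : nat) : hist k -> R * R :=
  match k return hist k -> R * R with
  | 0 => fun h => h
  | k.+1 => fun h => h.2
  end.

(* A (history-dependent, randomized) policy: given the list of past actions
   (most recent first; true = action 1, false = action 0) and the history of
   states, it gives the probability of choosing action 1. *)
Definition policy := forall acts : seq bool, hist (size acts) -> R.

Definition is_policy (pi : policy) : Prop :=
  forall acts : seq bool,
    measurable_fun setT (pi acts) /\
    (forall h, 0 <= pi acts h <= 1).

Definition greedy (pi : policy) : Prop :=
  forall acts (h : hist (size acts)),
    ((cur h).1 < (cur h).2 -> pi acts h = 1) /\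
    ((cur h).2 < (cur h).1 -> pi acts h = 0).

Local Open Scope ereal_scope.
Unset Implicit Arguments.

Fixpoint value (lam : {measure set R -> \bar R}) (p1 p2 : R -> R)
  (pi : policy) (n : nat) (acts : seq bool) (h : hist (size acts)) : \bar R :=
  match n with
  | 0 => 0
  | n.+1 =>
    let xi := cur h in
    let q := pi acts h in
    q%:E * (xi.2%:E +
      \int[lam]_(z in [set z : R | (0 <= z)%R])
        (value lam p1 p2 pi n (true :: acts)
           ((h, (xi.1 + z, xi.2)%R) : hist (size (true :: acts)))
         * (p1 z)%:E))
    + (1 - q)%:E * (xi.1%:E +
      \int[lam]_(z in [set z : R | (0 <= z)%R])
        (value lam p1 p2 pi n (false :: acts)
           ((h, (xi.1, xi.2 + z)%R) : hist (size (false :: acts)))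
         * (p2 z)%:E))
  end.

Definition density_mean (lam : {measure set R -> \bar R}) (p : R -> R)
  (theta : R) : Prop :=
  measurable_fun setT p /\
  (forall z, (0 <= z)%R -> (0 <= p z)%R) /\
  \int[lam]_(z in [set z : R | (0 <= z)%R]) (p z)%:E = 1 /\
  \int[lam]_(z in [set z : R | (0 <= z)%R]) (z * p z)%:E = theta%:E.

End MDP.

From HB Require Import structures.
From mathcomp Require Import all_boot all_order all_algebra.
From mathcomp Require Import all_classical all_reals all_analysis measurable_realfun.
Import Order.TTheory GRing.Theory Num.Theory.
Local Open Scope classical_set_scope.
Local Open Scope ring_scope.

(* Let V_n be the optimal value of the n-epoch Bellman recursion.  Any
   policy earns at most V_n, since a randomized decision is a convex
   combination of the two Bellman alternatives.  The greedy policy earns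
   exactly V_n, because on the quadrant the action with the larger immediate
   reward also has the larger Q-value.  This is proved by induction on the
   horizon through an interchange argument: if xi_1 <= xi_2, playing 0 then
   (greedily) 1 and playing 1 then 0 earn xi_1 + xi_2 + theta in expectation,
   since both increments have mean theta, and lead to the same law of the
   state, so by Fubini the Q-value of 0 is at most that of 1. *)

Section nonneg_integral.
Local Open Scope ereal_scope.
Context d (T : measurableType d) (R : realType).
Variable mu : {measure set T -> \bar R}.

(* No measurability is needed: the integral of a nonnegative function is the
   supremum over the simple functions below it. *)
Lemma ge0_le_integral_nonmeasurable (D : set T) (f g : T -> \bar R) :
  (forall x, D x -> 0 <= f x) -> (forall x, D x -> f x <= g x) ->
  \int[mu]_(x in D) f x <= \int[mu]_(x in D) g x.
Proof.
move=> f0 fg; have g0 x : D x -> 0 <= g x.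
  by move=> Dx; exact: le_trans (f0 _ Dx) (fg _ Dx).
rewrite !ge0_integralE //; apply: ereal_sup_le => _ [h /= hf <-].
exists h => //= x; apply: le_trans (hf x) _.
by rewrite /patch; case: ifP => // /[!in_setE] Dx; exact: fg.
Qed.

End nonneg_integral.

Section iterated_integral.
Local Open Scope ereal_scope.
Context d1 d2 (T1 : measurableType d1) (T2 : measurableType d2) (R : realType).

Lemma integral2_mkcond (m1 : {measure set T1 -> \bar R})
    (m2 : {measure set T2 -> \bar R}) (A : set T1) (B : set T2)
    (F : T1 -> T2 -> \bar R) :
  \int[m1]_(x in A) \int[m2]_(y in B) F x y =
  \int[m1]_x \int[m2]_y ((fun t => F t.1 t.2) \_ (A `*` B)) (x, y).
Proof.
rewrite integral_mkcond; apply: eq_integral => x _.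
rewrite /patch; case: ifPn => Ax.
  rewrite integral_mkcond; apply: eq_integral => y _.
  by rewrite /patch in_setX Ax.
by rewrite integral0_eq // => y _; rewrite /patch in_setX (negbTE Ax).
Qed.

End iterated_integral.

Section fubini_tonelli_restricted.
Local Open Scope ereal_scope.
Context d1 d2 (T1 : measurableType d1) (T2 : measurableType d2) (R : realType).
Variables (m1 : {sigma_finite_measure set T1 -> \bar R})
          (m2 : {sigma_finite_measure set T2 -> \bar R}).

Lemma fubini_tonelli_setX (A : set T1) (B : set T2) (F : T1 -> T2 -> \bar R) :
  measurable A -> measurable B ->
  measurable_fun setT (fun t => F t.1 t.2) ->
  (forall x y, A x -> B y -> 0 <= F x y) ->
  \int[m1]_(x in A) \int[m2]_(y in B) F x y =
  \int[m2]_(y in B) \int[m1]_(x in A) F x y.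
Proof.
move=> mA mB mF F0.
rewrite integral2_mkcond (@integral2_mkcond _ _ _ _ _ m2 m1 B A (fun y x => F x y)).
pose f := (fun t => F t.1 t.2) \_ (A `*` B).
have f0 t : 0 <= f t.
  rewrite /f /patch in_setX; case: ifP => // /andP[].
  by rewrite !in_setE; exact: F0.
have mf : measurable_fun setT f.
  by apply/(measurable_restrictT _ _).1; [exact: measurableX|exact: measurable_funTS].
rewrite (@fubini_tonelli _ _ _ _ _ m1 m2 f mf f0).
congr integral; apply/funext => y; congr integral; apply/funext => x.
by rewrite /f /patch !in_setX andbC.
Qed.

Lemma measurable_fun_integral_section (B : set T2) (f : T1 * T2 -> \bar R) :
  measurable B -> measurable_fun setT f ->
  (forall x y, B y -> 0 <= f (x, y)) ->
  measurable_fun setT (fun x => \int[m2]_(y in B) f (x, y)).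
Proof.
move=> mB mf f0; pose g := f \_ (setT `*` B).
have g0 t : 0 <= g t.
  rewrite /g /patch in_setX; case: ifP => // /andP[_].
  by rewrite in_setE; case: t => x y; exact: f0.
have mg : measurable_fun setT g.
  by apply/(measurable_restrictT _ _).1; [exact: measurableX|exact: measurable_funTS].
rewrite (_ : (fun x => _) = fubini_F m2 g); first exact: measurable_fun_fubini_tonelli_F.
apply/funext => x; rewrite /fubini_F [LHS]integral_mkcond.
congr integral; apply/funext => y.
by rewrite /g /patch in_setX in_setT.
Qed.

End fubini_tonelli_restricted.

Lemma measurable_Rge0 {R : realType} : measurable [set z : R | (0 <= z)%R].
Proof.
rewrite (_ : [set z | _] = `[0%R, +oo[%classic); first exact: measurable_itv.
by apply/seteqP; split => x /=; rewrite in_itv /= andbT.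
Qed.

Section density.
Local Open Scope ereal_scope.
Context (R : realType) (lam : {measure set R -> \bar R}).
Local Notation Rge0 := [set z : R | (0 <= z)%R].

Lemma integral_affine_density (p : R -> R) (theta c : R) (J : R -> \bar R) :
  density_mean R lam p theta -> (0 <= c)%R ->
  measurable_fun setT J -> (forall z, Rge0 z -> 0 <= J z) ->
  \int[lam]_(z in Rge0) (((c + z)%:E + J z) * (p z)%:E) =
  (c + theta)%:E + \int[lam]_(z in Rge0) (J z * (p z)%:E).
Proof.
move=> [mp [p0 [p_int1 p_mean]]] c0 mJ J0.
have mEp (f : R -> R) : measurable_fun setT f ->
    measurable_fun Rge0 (fun z => (f z * p z)%:E).
  by move=> mf; apply/measurable_funTS/measurable_EFinP; exact: measurable_funM.
have cp0 z : Rge0 z -> 0 <= (c * p z)%:E by move=> /p0 ?; rewrite lee_fin mulr_ge0.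
have zp0 z : Rge0 z -> 0 <= (z * p z)%:E by move=> /[dup] /p0 ? ?; rewrite lee_fin mulr_ge0.
have Jp0 z : Rge0 z -> 0 <= J z * (p z)%:E.
  by move=> /[dup] /p0 ? /J0 ?; rewrite mule_ge0 ?lee_fin.
have split_integrand : {in Rge0, forall z, ((c + z)%:E + J z) * (p z)%:E =
    (c * p z)%:E + (z * p z)%:E + J z * (p z)%:E}.
  move=> z /[!in_setE] z0; rewrite ge0_muleDl ?lee_fin ?addr_ge0 ?J0 //.
  by rewrite -EFinM mulrDl EFinD.
rewrite (eq_integral _ _ split_integrand).
rewrite ge0_integralD //; last 4 first.
- exact: measurable_Rge0.
- by move=> z z0; rewrite adde_ge0 ?cp0 ?zp0.
- by apply/measurable_funTS/measurable_EFinP; apply: measurable_funD; apply: measurable_funM.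
- by apply/measurable_funTS/emeasurable_funM => //; exact/measurable_EFinP.
rewrite ge0_integralD //; [|exact: measurable_Rge0|exact: mEp|exact: mEp].
under eq_integral do rewrite EFinM.
rewrite ge0_integralZl_EFin //; last 2 first.
- exact: measurable_Rge0.
- exact/measurable_funTS/measurable_EFinP.
by rewrite p_int1 mule1 p_mean EFinD.
Qed.

End density.

Section convex_combination.
Local Open Scope ereal_scope.
Context (R : realDomainType).

Lemma convex_comb_le (q : R) (a b M : \bar R) : (0 <= q <= 1)%R ->
  0 <= a -> 0 <= b -> a <= M -> b <= M -> q%:E * a + (1 - q)%:E * b <= M.
Proof.
move=> /andP[q0 q1] a0 b0; case: M => [m| |]; last 2 first.
- by move=> _ _; rewrite leey.
- by move=> aM; have := le_trans a0 aM.
case: a a0 => [a| |] a0 //; case: b b0 => [b| |] b0 //; rewrite ?leye_eq //.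
rewrite !lee_fin => am bm.
have qa : (q * a <= q * m)%R by rewrite ler_wpM2l.
have qb : ((1 - q) * b <= (1 - q) * m)%R by rewrite ler_wpM2l // subr_ge0.
by apply: le_trans (lerD qa qb) _; rewrite -mulrDl addrC subrK mul1r.
Qed.

Lemma convex_comb_id (q : R) (a : \bar R) : (0 <= q <= 1)%R -> 0 <= a ->
  q%:E * a + (1 - q)%:E * a = a.
Proof.
move=> /andP[q0 q1] a0; rewrite -ge0_muleDl ?lee_fin ?subr_ge0 //.
by rewrite -EFinD addrC subrK mul1e.
Qed.

End convex_combination.

Section greedy_optimality.
Local Open Scope ereal_scope.
Variables (R : realType) (lam : {measure set R -> \bar R}).
Hypothesis lam_sigma_finite : sigma_finite setT lam.
Variables (p1 p2 : R -> R) (theta : R).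
Hypotheses (p1_density : density_mean R lam p1 theta)
           (p2_density : density_mean R lam p2 theta).
Local Notation Rge0 := [set z : R | (0 <= z)%R].

Definition lamS : set R -> \bar R := fun A => lam A.
HB.instance Definition _ := Measure.on lamS.
HB.instance Definition _ :=
  @Measure_isSigmaFinite.Build _ _ _ lamS lam_sigma_finite.

Definition step (a : bool) (s : R * R) (z : R) : R * R :=
  if a then (s.1 + z, s.2)%R else (s.1, s.2 + z)%R.
Definition reward (a : bool) (s : R * R) : R := if a then s.2 else s.1.
Definition dens (a : bool) : R -> R := if a then p1 else p2.

Definition in_quadrant (s : R * R) : bool := (0 <= s.1)%R && (0 <= s.2)%R.

(* Rewards are clipped at 0 so that the optimal value is nonnegative on the
   whole plane; the clipping is void on the quadrant, where the process lives. *)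
Fixpoint optval (n : nat) (s : R * R) : \bar R :=
  if n is m.+1 then
    let q a := (Num.max (reward a s) 0)%:E +
      \int[lam]_(z in Rge0) (optval m (step a s z) * (dens a z)%:E) in
    maxe (q true) (q false)
  else 0.

Definition contval (n : nat) (a : bool) (s : R * R) : \bar R :=
  \int[lam]_(z in Rge0) (optval n (step a s z) * (dens a z)%:E).

Definition qval (n : nat) (a : bool) (s : R * R) : \bar R :=
  (Num.max (reward a s) 0)%:E + contval n a s.

Lemma optvalS n s : optval n.+1 s = maxe (qval n true s) (qval n false s).
Proof. by []. Qed.

Lemma density_dens a : density_mean R lam (dens a) theta.
Proof. by case: a. Qed.

Lemma dens_ge0 a z : Rge0 z -> (0 <= dens a z)%R.
Proof. by case: (density_dens a) => _ [+ _]; apply. Qed.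

Lemma measurable_dens a : measurable_fun setT (dens a).
Proof. by case: (density_dens a). Qed.

Lemma reward_step a s z : reward a (step a s z) = reward a s.
Proof. by case: a. Qed.

Lemma reward_stepN a s z : reward (~~ a) (step a s z) = (reward (~~ a) s + z)%R.
Proof. by case: a. Qed.

Lemma step_comm a s u v : step a (step (~~ a) s v) u = step (~~ a) (step a s u) v.
Proof. by case: a. Qed.

Lemma reward_ge0 a s : in_quadrant s -> (0 <= reward a s)%R.
Proof. by case: a => /andP[]. Qed.

Lemma in_quadrant_step a s z : in_quadrant s -> Rge0 z -> in_quadrant (step a s z).
Proof. by case: a => /andP[s1 s2] z0; rewrite /in_quadrant /= ?addr_ge0 ?s1 ?s2. Qed.

Lemma measurable_step a : measurable_fun setT (fun t : (R * R) * R => step a t.1 t.2).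
Proof.
case: a; apply: measurable_fun_pair => /=.
- by apply: measurable_funD => //; exact: measurableT_comp measurable_fst measurable_fst.
- exact: measurableT_comp measurable_snd measurable_fst.
- exact: measurableT_comp measurable_fst measurable_fst.
- by apply: measurable_funD => //; exact: measurableT_comp measurable_snd measurable_fst.
Qed.

Lemma measurable_step_at a s : measurable_fun setT (step a s).
Proof. by case: a; apply: measurable_fun_pair => //; exact: measurable_funD. Qed.

Lemma optval_ge0 n s : 0 <= optval n s.
Proof.
elim: n s => [//|n IH] s; rewrite optvalS le_max; apply/orP; left.
apply: adde_ge0; first by rewrite lee_fin le_max lexx orbT.
by apply: integral_ge0 => z z0; rewrite mule_ge0 ?lee_fin ?dens_ge0.
Qed.

Lemma contval_ge0 n a s : 0 <= contval n a s.
Proof. by apply: integral_ge0 => z z0; rewrite mule_ge0 ?optval_ge0 ?lee_fin ?dens_ge0. Qed.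

Lemma measurable_contval n a :
  measurable_fun setT (optval n) -> measurable_fun setT (contval n a).
Proof.
move=> mV; rewrite /contval.
apply: (measurable_fun_integral_section _ _ _ _ _ lamS _
  (fun t => optval n (step a t.1 t.2) * (dens a t.2)%:E) measurable_Rge0).
- apply: emeasurable_funM; first exact: measurableT_comp mV (measurable_step a).
  by apply/measurable_EFinP; exact: measurableT_comp (measurable_dens a) measurable_snd.
- by move=> s z z0; rewrite mule_ge0 ?optval_ge0 ?lee_fin ?dens_ge0.
Qed.

Lemma measurable_optval n : measurable_fun setT (optval n).
Proof.
elim: n => [|n IH]; first exact: measurable_cst.
have mq a : measurable_fun setT (qval n a).
  apply: emeasurable_funD; last exact: measurable_contval.
  apply/measurable_EFinP/measurable_maxr => //.
  by case: a; [exact: measurable_snd|exact: measurable_fst].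
have -> : optval n.+1 = fun s => maxe (qval n true s) (qval n false s) by [].
exact: measurable_maxe.
Qed.

Lemma qvalE n a s : in_quadrant s -> qval n a s = (reward a s)%:E + contval n a s.
Proof. by move=> /(reward_ge0 a) r0; rewrite /qval max_l. Qed.

Lemma qval_le_optvalS n a s : qval n a s <= optval n.+1 s.
Proof. by rewrite optvalS le_max; case: a; rewrite lexx ?orbT. Qed.

Lemma optvalS_eq n a s : qval n (~~ a) s <= qval n a s -> optval n.+1 s = qval n a s.
Proof. by rewrite optvalS; case: a => /= ?; [rewrite max_l|rewrite max_r]. Qed.

Lemma measurable_contval_integrand n a s :
  measurable_fun setT (fun z => optval n (step a s z) * (dens a z)%:E).
Proof.
apply: emeasurable_funM; last by apply/measurable_EFinP; exact: measurable_dens.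
exact: measurableT_comp (measurable_optval n) (measurable_step_at a s).
Qed.

Lemma measurable_step_stepN a s :
  measurable_fun setT (fun t : R * R => step a (step (~~ a) s t.2) t.1).
Proof. by case: a; apply: measurable_fun_pair => /=; apply: measurable_funD. Qed.

Lemma contval_stepN_swap n a s :
  \int[lam]_(z in Rge0) (contval n a (step (~~ a) s z) * (dens (~~ a) z)%:E) =
  \int[lam]_(z in Rge0) (contval n (~~ a) (step a s z) * (dens a z)%:E).
Proof.
pose F u v := optval n (step a (step (~~ a) s v) u) * (dens a u)%:E * (dens (~~ a) v)%:E.
have F0 u v : Rge0 u -> Rge0 v -> 0 <= F u v.
  by move=> u0 v0; rewrite !mule_ge0 ?optval_ge0 ?lee_fin ?dens_ge0.
have mF : measurable_fun setT (fun t : R * R => F t.1 t.2).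
  apply: emeasurable_funM; first apply: emeasurable_funM.
  - exact: measurableT_comp (measurable_optval n) (measurable_step_stepN a s).
  - by apply/measurable_EFinP; exact: measurableT_comp (measurable_dens _) measurable_fst.
  - by apply/measurable_EFinP; exact: measurableT_comp (measurable_dens _) measurable_snd.
have integrand_ge0 b s' z : Rge0 z -> 0 <= optval n (step b s' z) * (dens b z)%:E.
  by move=> z0; rewrite mule_ge0 ?optval_ge0 ?lee_fin ?dens_ge0.
transitivity (\int[lam]_(v in Rge0) \int[lam]_(u in Rge0) F u v).
  apply: eq_integral => v /[!in_setE] v0.
  rewrite /contval -ge0_integralZr ?lee_fin ?dens_ge0 //.
  - exact: measurable_Rge0.
  - by apply: measurable_funTS; exact: measurable_contval_integrand.
  - by move=> u; exact: integrand_ge0.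
rewrite -(fubini_tonelli_setX _ _ _ _ _ lamS lamS _ _ _ measurable_Rge0 measurable_Rge0 mF F0).
apply: eq_integral => u /[!in_setE] u0.
rewrite /contval -ge0_integralZr ?lee_fin ?dens_ge0 //.
- by apply: eq_integral => v _; rewrite /F step_comm muleAC.
- exact: measurable_Rge0.
- by apply: measurable_funTS; exact: measurable_contval_integrand.
- by move=> v; exact: integrand_ge0.
Qed.

Definition greedy_dominant n := forall a s, in_quadrant s ->
  (reward (~~ a) s <= reward a s)%R -> qval n (~~ a) s <= qval n a s.

Lemma greedy_dominant0 : greedy_dominant 0.
Proof.
move=> a s s_q ra; rewrite !qvalE // /contval !integral0_eq ?adde0 ?lee_fin //.
all: by move=> z _; rewrite mul0e.
Qed.

Lemma optvalS_greedy n a s : greedy_dominant n -> in_quadrant s ->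
  (reward (~~ a) s <= reward a s)%R ->
  optval n.+1 s = (reward a s)%:E + contval n a s.
Proof. by move=> dom s_q ra; rewrite (optvalS_eq _ _ _ (dom a s s_q ra)) qvalE. Qed.

Lemma greedy_dominantS n : greedy_dominant n -> greedy_dominant n.+1.
Proof.
move=> dom a s s_q ra.
have mJ b c t : measurable_fun setT (fun z => contval n b (step c t z)).
  apply: measurableT_comp (measurable_step_at c t).
  exact: measurable_contval (measurable_optval n).
set X := \int[lam]_(z in Rge0) (contval n (~~ a) (step a s z) * (dens a z)%:E).
have contN : contval n.+1 (~~ a) s = (reward a s + theta)%:E + X.
  rewrite /X -contval_stepN_swap.
  rewrite -(integral_affine_density _ _ _ _ _ _ (density_dens (~~ a))
    (reward_ge0 a s s_q) (mJ a (~~ a) s)); last by move=> z _; exact: contval_ge0.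
  apply: eq_integral => z /[!in_setE] z0.
  have := reward_stepN (~~ a) s z; rewrite negbK => rN.
  rewrite (optvalS_greedy n a) ?in_quadrant_step ?rN ?reward_step //.
  by rewrite (le_trans ra) ?lerDl.
have contA : (reward (~~ a) s + theta)%:E + X <= contval n.+1 a s.
  rewrite /X -(integral_affine_density _ _ _ _ _ _ (density_dens a)
    (reward_ge0 (~~ a) s s_q) (mJ (~~ a) a s)); last by move=> z _; exact: contval_ge0.
  apply: ge0_le_integral_nonmeasurable => z z0.
    rewrite mule_ge0 ?lee_fin ?dens_ge0 // adde_ge0 ?contval_ge0 //.
    by rewrite lee_fin addr_ge0 ?reward_ge0.
  rewrite lee_wpmul2r ?lee_fin ?dens_ge0 //.
  by rewrite -reward_stepN -qvalE ?in_quadrant_step // qval_le_optvalS.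
clearbody X; rewrite !qvalE // contN addeA -EFinD addrCA EFinD -addeA.
exact: leeD2l contA.
Qed.

Lemma greedy_dominantP n : greedy_dominant n.
Proof. by elim: n => [|n]; [exact: greedy_dominant0|exact: greedy_dominantS]. Qed.

Definition policy_contval (pi : policy R) n acts (h : hist R (size acts)) a :=
  \int[lam]_(z in Rge0) (value R lam p1 p2 pi n (a :: acts)
    ((h, step a (cur h) z) : hist R (size (a :: acts))) * (dens a z)%:E).

Lemma valueS pi n acts (h : hist R (size acts)) :
  value R lam p1 p2 pi n.+1 acts h =
  (pi acts h)%:E * ((reward true (cur h))%:E + policy_contval pi n acts h true) +
  (1 - pi acts h)%:E * ((reward false (cur h))%:E + policy_contval pi n acts h false).
Proof. by []. Qed.

Section fixed_policy.
Variable pi : policy R.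
Hypothesis pi_policy : is_policy pi.

Lemma policy_prob acts h : (0 <= pi acts h <= 1)%R.
Proof. by case: (pi_policy acts) => _; apply. Qed.

Lemma value_ge0 n acts (h : hist R (size acts)) :
  in_quadrant (cur h) -> 0 <= value R lam p1 p2 pi n acts h.
Proof.
elim: n acts h => [//|n IH] acts h h_q.
have /andP[q0 q1] := policy_prob acts h.
have cont_ge0 a : 0 <= policy_contval pi n acts h a.
  by apply: integral_ge0 => z z0; rewrite mule_ge0 ?IH ?in_quadrant_step ?lee_fin ?dens_ge0.
by rewrite valueS adde_ge0 // mule_ge0 ?lee_fin ?subr_ge0 // adde_ge0 ?lee_fin ?reward_ge0.
Qed.

Lemma value_le_optval n acts (h : hist R (size acts)) :
  in_quadrant (cur h) -> value R lam p1 p2 pi n acts h <= optval n (cur h).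
Proof.
elim: n acts h => [//|n IH] acts h h_q.
have step_value a z : Rge0 z ->
    in_quadrant (cur ((h, step a (cur h) z) : hist R (size (a :: acts)))).
  exact: in_quadrant_step.
have cont_ge0 a : 0 <= policy_contval pi n acts h a.
  by apply: integral_ge0 => z z0; rewrite mule_ge0 ?value_ge0 ?step_value ?lee_fin ?dens_ge0.
have q_le a : (reward a (cur h))%:E + policy_contval pi n acts h a <= optval n.+1 (cur h).
  apply: le_trans (qval_le_optvalS n a _); rewrite qvalE //; apply: leeD2l.
  apply: ge0_le_integral_nonmeasurable => z z0.
    by rewrite mule_ge0 ?value_ge0 ?step_value ?lee_fin ?dens_ge0.
  by rewrite lee_wpmul2r ?lee_fin ?dens_ge0 ?IH ?step_value.
rewrite valueS convex_comb_le ?policy_prob ?q_le //.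
all: by rewrite adde_ge0 ?lee_fin ?reward_ge0.
Qed.

Hypothesis pi_greedy : greedy pi.

Lemma value_greedy n acts (h : hist R (size acts)) :
  in_quadrant (cur h) -> value R lam p1 p2 pi n acts h = optval n (cur h).
Proof.
elim: n acts h => [//|n IH] acts h h_q.
have cont_eq a : policy_contval pi n acts h a = contval n a (cur h).
  by apply: eq_integral => z /[!in_setE] z0; rewrite IH ?in_quadrant_step.
have optval_eq a : (reward (~~ a) (cur h) <= reward a (cur h))%R ->
    optval n.+1 (cur h) = qval n a (cur h).
  by move=> ra; apply: optvalS_eq; exact: greedy_dominantP.
rewrite valueS !cont_eq -!qvalE //.
have [pi1 pi0] := pi_greedy acts h.
case: (ltgtP (cur h).1 (cur h).2) => [lt12|gt12|eq12].
- by rewrite pi1 // subrr mul1e mul0e adde0 (optval_eq true) ?ltW.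
- by rewrite pi0 // subr0 mul1e mul0e add0e (optval_eq false) ?ltW.
- have r_le a : (reward (~~ a) (cur h) <= reward a (cur h))%R by case: a; rewrite /= eq12.
  rewrite -(optval_eq true (r_le true)) -(optval_eq false (r_le false)).
  by rewrite convex_comb_id ?policy_prob ?optval_ge0.
Qed.

End fixed_policy.
End greedy_optimality.

Theorem theorem2p1 (R : realType) (lam : {measure set R -> \bar R})
  (p1 p2 : R -> R) (theta : R) :
  sigma_finite setT lam ->
  density_mean R lam p1 theta ->
  density_mean R lam p2 theta ->
  forall pig : policy R, is_policy pig -> greedy pig ->
  forall (N : nat), (1 <= N)%N ->
  forall x1 x2 : R, 0 <= x1 -> 0 <= x2 ->
  forall pi : policy R, is_policy pi ->
    (value R lam p1 p2 pi N [::] ((x1, x2) : hist R 0)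
     <= value R lam p1 p2 pig N [::] ((x1, x2) : hist R 0))%E.
Proof.
move=> lam_sf p1_dens p2_dens pig pig_policy pig_greedy N _ x1 x2 x1_ge0 x2_ge0.
move=> pi pi_policy; have x_q : in_quadrant R (x1, x2) by apply/andP.
rewrite (value_greedy R lam lam_sf p1 p2 theta p1_dens p2_dens
  pig pig_policy pig_greedy N [::] _ x_q).
exact: (value_le_optval R lam p1 p2 theta p1_dens p2_dens pi pi_policy N [::] _ x_q).
Qed.
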